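(* Let $d\ge 2$, $n\ge 1$ and $0\le k<n$ be integers, and let $\mathbb{Z}_d$ be the ring of integers modulo $d$. Let $\Lambda=\begin{pmatrix}0&I_n\\-I_n&0\end{pmatrix}$ and $\mathrm{Sp}(2n,\mathbb{Z}_d)=\{M\in M_{2n}(\mathbb{Z}_d): M^T\Lambda M=\Lambda\}$. Let $T(n,k,d)$ be the set of all $M\in \mathrm{Sp}(2n,\mathbb{Z}_d)$ which, in block form with respect to the partition of rows and columns into consecutive blocks of sizes $(n-k,\,k,\,n-k,\,k)$, have the form $$M=\begin{pmatrix}(A^T)^{-1}&0&0&0\\ M_{21}&M_{22}&0&M_{24}\\ M_{31}&M_{32}&A&M_{34}\\ M_{41}&M_{42}&0&M_{44}\end{pmatrix}$$ for some invertible $A\in \mathrm{GL}(n-k,\mathbb{Z}_d)$ and arbitrary blocks $M_{ij}$ of the appropriate sizes (when $k=0$ this reads $M=\begin{pmatrix}(A^T)^{-1}&0\\ M_{31}&A\end{pmatrix}$). Then $T(n,k,d)$ is a subgroup of $\mathrm{Sp}(2n,\mathbb{Z}_d)$.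
   Context: All matrix arithmetic is over the ring $\mathbb{Z}_d$ (which need not be a field). $I_m$ denotes the $m\times m$ identity matrix and $\mathrm{GL}(m,\mathbb{Z}_d)$ the group of invertible $m\times m$ matrices over $\mathbb{Z}_d$. *)

From HB Require Import structures.
From mathcomp Require Import all_boot all_order all_algebra all_fingroup.
Unset Printing Implicit Defensive.
Import GRing.Theory.
Local Open Scope ring_scope.

Definition Lambda (d n : nat) : 'M['Z_d]_(n + n) :=
  block_mx 0 1%:M (- 1%:M) 0.

Definition Sp (d n : nat) (M : 'M['Z_d]_(n + n)) : Prop :=
  M^T *m Lambda d n *m M = Lambda d n.

(* T(n,k,d): symplectic M with block form, for blocks of sizes
   (n-k, k, n-k, k) (row/column indices [0,n-k), [n-k,n), [n,2n-k), [2n-k,2n)):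
     [ (A^T)^-1  0    0   0   ]
     [  *        *    0   *   ]
     [  *        *    A   *   ]
     [  *        *    0   *   ]
   with A invertible (n-k)x(n-k). *)
Definition Tset (n k d : nat) (M : 'M['Z_d]_(n + n)) : Prop :=
  Sp d n M /\
  exists A : 'M['Z_d]_(n - k), A \in unitmx /\
    (forall (i j : 'I_(n + n)) (a b : 'I_(n - k)),
        val i = val a -> val j = val b -> M i j = invmx A^T a b) /\
    (forall (i j : 'I_(n + n)) (a b : 'I_(n - k)),
        val i = (n + val a)%N -> val j = (n + val b)%N -> M i j = A a b) /\
    (forall i j : 'I_(n + n), (val i < n - k)%N -> (n - k <= val j)%N -> M i j = 0) /\
    (forall i j : 'I_(n + n), (n <= val j < n + n - k)%N ->
        ~~ (n <= val i < n + n - k)%N -> M i j = 0).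

From HB Require Import structures.
From mathcomp Require Import all_boot all_order all_algebra all_fingroup.
From mathcomp Require Import zify.
Local Open Scope ring_scope.
Import GRing.Theory.

(* A symplectic matrix M is invertible with inverse -Lambda M^T Lambda, whose
   (i, j) entry is +-M (s j) (s i), where s swaps the two halves of the index set.
   The shape of T(n,k,d) says that the coordinate subspace spanned by the indices
   [0, n-k) is stable under M acting on row vectors, that the one spanned by
   [n, 2n-k) is stable under M^T, and that the two corresponding diagonal blocks
   are (A^T)^-1 and A.  Both stability conditions survive products, and on stable
   subspaces the diagonal blocks multiply.  Since s exchanges the two index sets,
   the inverse formula exchanges the two conditions and transposes the blocks,
   which gives the shape of T(n,k,d) with A^-1 in place of A. *)

Definition coord_stable {R : nmodType} {m} (S : {set 'I_m}) (M : 'M[R]_m) :=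
  forall i j, i \in S -> j \notin S -> M i j = 0.

Section CoordStable.
Variable R : pzSemiRingType.

Lemma coord_stable1 m (S : {set 'I_m}) : coord_stable S (1%:M : 'M[R]_m).
Proof. by move=> i j Si Sj; rewrite mxE; case: eqP => // eij; rewrite -eij Si in Sj. Qed.

Lemma coord_stable_mul m (S : {set 'I_m}) (M N : 'M[R]_m) :
  coord_stable S M -> coord_stable S N -> coord_stable S (M *m N).
Proof.
move=> sM sN i j Si Sj; rewrite mxE big1 // => l _.
by have [Sl|Sl] := boolP (l \in S); [rewrite sN ?mulr0 | rewrite sM ?mul0r].
Qed.

Lemma sum_imset_inj m p (g : 'I_p -> 'I_m) (F : 'I_m -> R) :
  injective g -> (forall l, l \notin g @: setT -> F l = 0) ->
  \sum_l F l = \sum_a F (g a).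
Proof.
move=> g_inj F0; rewrite (bigID (mem (g @: setT))) /= [X in _ + X]big1 ?addr0 //.
by rewrite big_imset; [apply: eq_bigl => a; rewrite inE | move=> a b _ _ /g_inj].
Qed.

Lemma mxsub_mulmx_stable m p (g : 'I_p -> 'I_m) (M N : 'M[R]_m) :
  injective g -> coord_stable (g @: setT) M ->
  mxsub g g (M *m N) = mxsub g g M *m mxsub g g N.
Proof.
move=> g_inj sM; apply/matrixP => a b; rewrite !mxE (@sum_imset_inj _ _ g) //.
  by apply: eq_bigr => c _; rewrite !mxE.
by move=> l gl; rewrite sM ?mul0r ?imset_f ?inE.
Qed.

Lemma mxsub_mulmx_costable m p (g : 'I_p -> 'I_m) (M N : 'M[R]_m) :
  injective g -> coord_stable (g @: setT) N^T ->
  mxsub g g (M *m N) = mxsub g g M *m mxsub g g N.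
Proof.
move=> g_inj sN; apply/matrixP => a b; rewrite !mxE (@sum_imset_inj _ _ g) //.
  by apply: eq_bigr => c _; rewrite !mxE.
by move=> l gl; have := sN (g b) l; rewrite mxE => ->; rewrite ?mulr0 ?imset_f ?inE.
Qed.

Lemma mxsub_inj_scalar m p (g : 'I_p -> 'I_m) (c : R) :
  injective g -> mxsub g g c%:M = c%:M.
Proof. by move=> g_inj; apply/matrixP => a b; rewrite !mxE (inj_eq g_inj). Qed.

End CoordStable.

Lemma mxsub_eqP (T : Type) m p (g : 'I_p -> 'I_m) (M : 'M[T]_m) (X : 'M[T]_p) :
  (forall i j a b, i = g a -> j = g b -> M i j = X a b) <-> mxsub g g M = X.
Proof.
split=> [eMX | <- i j a b -> ->]; last by rewrite mxE.
by apply/matrixP => a b; rewrite mxE (eMX _ _ a b).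
Qed.

Lemma invmx_left (R : comUnitRingType) m (A B : 'M[R]_m) :
  B *m A = 1%:M -> invmx A = B.
Proof.
move=> BA; have [_ uA] := mulmx1_unit BA.
by rewrite -[invmx A]mul1mx -BA mulmxK.
Qed.

Lemma invmxM (R : comUnitRingType) m (A B : 'M[R]_m) :
  A \in unitmx -> B \in unitmx -> invmx (A *m B) = invmx B *m invmx A.
Proof.
move=> uA uB; apply: invmx_left.
by rewrite mulmxA -(mulmxA (invmx B)) mulVmx // mulmx1 mulVmx.
Qed.

Definition swap_half {n} (i : 'I_(n + n)) : 'I_(n + n) :=
  match split i with inl a => rshift n a | inr a => lshift n a end.

Lemma swap_half_lshift n (a : 'I_n) : swap_half (lshift n a) = rshift n a.
Proof. by rewrite /swap_half -[lshift n a]/(unsplit (inl _ a)) unsplitK. Qed.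

Lemma swap_half_rshift n (a : 'I_n) : swap_half (rshift n a) = lshift n a.
Proof. by rewrite /swap_half -[rshift n a]/(unsplit (inr _ a)) unsplitK. Qed.

Lemma swap_halfK n : involutive (@swap_half n).
Proof.
by move=> i; case: (split_ordP i) => a ->; rewrite ?(swap_half_lshift, swap_half_rshift).
Qed.

Section Symplectic.
Variables (R : comUnitRingType) (n : nat).
Implicit Types (M N : 'M[R]_(n + n)) (i : 'I_(n + n)).

Definition symp_form : 'M[R]_(n + n) := block_mx 0 1%:M (- 1%:M) 0.

Definition symplectic M := M^T *m symp_form *m M = symp_form.

Lemma symp_form_sqr : symp_form *m symp_form = - 1%:M.
Proof.
rewrite /symp_form mulmx_block !(mul0mx, mulmx0, mul1mx, mulmx1, mulNmx, addr0, add0r).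
by rewrite (scalar_mx_block n n) opp_block_mx !oppr0.
Qed.

Lemma symplectic1 : symplectic 1%:M.
Proof. by rewrite /symplectic trmx1 mul1mx mulmx1. Qed.

Lemma symplectic_mul M N : symplectic M -> symplectic N -> symplectic (M *m N).
Proof.
rewrite /symplectic trmx_mul => sM sN.
have -> : N^T *m M^T *m symp_form *m (M *m N) = N^T *m (M^T *m symp_form *m M) *m N.
  by rewrite !mulmxA.
by rewrite sM sN.
Qed.

Lemma symplectic_mulVmx M :
  symplectic M -> - (symp_form *m M^T *m symp_form) *m M = 1%:M.
Proof. by move=> sM; rewrite mulNmx -!mulmxA (mulmxA M^T) sM symp_form_sqr opprK. Qed.

Lemma symplectic_unitmx M : symplectic M -> M \in unitmx.
Proof. by move=> /symplectic_mulVmx /mulmx1_unit []. Qed.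

Lemma symplectic_invmx M :
  symplectic M -> invmx M = - (symp_form *m M^T *m symp_form).
Proof. by move=> /symplectic_mulVmx /invmx_left. Qed.

Lemma symplectic_inv M : symplectic M -> symplectic (invmx M).
Proof.
move=> sM; have uM := symplectic_unitmx _ sM; rewrite /symplectic -{1}sM.
rewrite -mulmxA -!(mulmxA M^T) !mulmxA -trmx_mul mulmxV // trmx1 mul1mx.
by rewrite -!mulmxA mulmxV // mulmx1.
Qed.

Lemma symplectic_invmx_block M : symplectic M ->
  invmx M = block_mx (drsubmx M)^T (- (ursubmx M)^T) (- (dlsubmx M)^T) (ulsubmx M)^T.
Proof.
move=> /symplectic_invmx ->; rewrite -{1}[M]submxK tr_block_mx /symp_form !mulmx_block.
rewrite !(mul0mx, mulmx0, mul1mx, mulmx1, mulNmx, mulmxN, addr0, add0r, oppr0).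
by rewrite opp_block_mx !opprK.
Qed.

Lemma symplectic_invmxE M i j : symplectic M ->
  invmx M i j = (if (i < n)%N == (j < n)%N then 1 else -1) * M (swap_half j) (swap_half i).
Proof.
move=> /symplectic_invmx_block ->.
case: (split_ordP i) => a ->; case: (split_ordP j) => b ->;
  rewrite ?(block_mxEul, block_mxEur, block_mxEdl, block_mxEdr) !mxE;
  by rewrite ?(swap_half_lshift, swap_half_rshift) ?mul1r ?mulN1r.
Qed.

Variables (p : nat) (g : 'I_p -> 'I_n).

Lemma swap_half_in_rshift i :
  (swap_half i \in (@rshift n n \o g) @: setT) = (i \in (lshift n \o g) @: setT).
Proof.
apply/imsetP/imsetP => -[a _ e]; exists a => //=.
  by rewrite -[i]swap_halfK e /= swap_half_rshift.
by rewrite e /= swap_half_lshift.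
Qed.

Lemma swap_half_in_lshift i :
  (swap_half i \in (lshift n \o g) @: setT) = (i \in (@rshift n n \o g) @: setT).
Proof. by rewrite -swap_half_in_rshift swap_halfK. Qed.

Lemma symplectic_invmx_stable M : symplectic M ->
  coord_stable ((@rshift n n \o g) @: setT) M^T ->
  coord_stable ((lshift n \o g) @: setT) (invmx M).
Proof.
move=> sM sMt i j gi gj; rewrite symplectic_invmxE //.
by have := sMt (swap_half i) (swap_half j); rewrite mxE swap_half_in_rshift => ->;
  rewrite ?mulr0 ?swap_half_in_rshift.
Qed.

Lemma symplectic_invmx_costable M : symplectic M ->
  coord_stable ((lshift n \o g) @: setT) M ->
  coord_stable ((@rshift n n \o g) @: setT) (invmx M)^T.
Proof.
move=> sM sM' i j gi gj; rewrite mxE symplectic_invmxE //.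
by rewrite sM' ?mulr0 ?swap_half_in_lshift.
Qed.

Lemma symplectic_invmx_sub_ul M : symplectic M ->
  mxsub (lshift n \o g) (lshift n \o g) (invmx M) =
  (mxsub (@rshift n n \o g) (@rshift n n \o g) M)^T.
Proof.
move=> sM; apply/matrixP => a b.
by rewrite !mxE symplectic_invmxE //= !swap_half_lshift !ltn_ord mul1r.
Qed.

Lemma symplectic_invmx_sub_dr M : symplectic M ->
  mxsub (@rshift n n \o g) (@rshift n n \o g) (invmx M) =
  (mxsub (lshift n \o g) (lshift n \o g) M)^T.
Proof.
move=> sM; apply/matrixP => a b.
by rewrite !mxE symplectic_invmxE //= !swap_half_rshift !ltnNge !leq_addr mul1r.
Qed.

End Symplectic.

Arguments symplectic {R n} M.

Lemma widen_ord_inj m p (le_mp : (m <= p)%N) : injective (widen_ord le_mp).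
Proof. by move=> a b /(congr1 val) e; apply: val_inj. Qed.

Section SymplecticBlockGroup.
Variables (d n k : nat).
Implicit Types M N : 'M['Z_d]_(n + n).

Local Notation lo_idx := (lshift n \o widen_ord (leq_subr k n)).
Local Notation hi_idx := (@rshift n n \o widen_ord (leq_subr k n)).

Lemma lo_idx_inj : injective lo_idx.
Proof. exact: inj_comp (@lshift_inj _ _) (widen_ord_inj _ _ _). Qed.

Lemma hi_idx_inj : injective hi_idx.
Proof. exact: inj_comp (@rshift_inj _ _) (widen_ord_inj _ _ _). Qed.

Lemma mem_lo_set i : (i \in lo_idx @: setT) = (val i < n - k)%N.
Proof.
apply/imsetP/idP => [[a _ ->] /= | lt_i]; first exact: ltn_ord.
by exists (Ordinal lt_i) => //; apply: val_inj.
Qed.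

Lemma mem_hi_set i : (i \in hi_idx @: setT) = (n <= val i < n + n - k)%N.
Proof.
apply/imsetP/idP => [[a _ ->] /= | /andP [le_n_i lt_i]].
  by have := ltn_ord a; rewrite /= leq_addr; lia.
have lt_a : (val i - n < n - k)%N by lia.
by exists (Ordinal lt_a) => //; apply: val_inj; rewrite /= subnKC.
Qed.

Lemma TsetP M : Tset n k d M <->
  symplectic M /\ exists2 A, A \in unitmx &
    [/\ mxsub lo_idx lo_idx M = invmx A^T, mxsub hi_idx hi_idx M = A,
        coord_stable (lo_idx @: setT) M & coord_stable (hi_idx @: setT) M^T].
Proof.
split=> [[sM [A [uA [h11 [h33 [z1 z3]]]]]] | [sM [A uA [h11 h33 z1 z3]]]].
  split=> //; exists A => //; split.
  - by apply/mxsub_eqP => i j a b -> ->; apply: h11.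
  - by apply/mxsub_eqP => i j a b -> ->; apply: h33.
  - by move=> i j; rewrite !mem_lo_set -leqNgt; apply: z1.
  - by move=> i j; rewrite mxE !mem_hi_set; apply: z3.
split=> //; exists A; do ![split=> //].
- move/mxsub_eqP: h11 => h11 i j a b ia jb.
  by apply: h11; apply: val_inj.
- move/mxsub_eqP: h33 => h33 i j a b ia jb.
  by apply: h33; apply: val_inj.
- by move=> i j; rewrite -mem_lo_set => i_lo; rewrite leqNgt -mem_lo_set; apply: z1.
- by move=> i j; rewrite -!mem_hi_set => j_hi i_hi; have := z3 j i j_hi i_hi; rewrite mxE.
Qed.

Lemma Tset1 : Tset n k d 1%:M.
Proof.
apply/TsetP; split; first exact: symplectic1.
exists 1%:M; first exact: unitmx1.
rewrite !trmx1 invmx1 !mxsub_inj_scalar; [|apply: hi_idx_inj|apply: lo_idx_inj].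
by split=> //; apply: coord_stable1.
Qed.

Lemma Tset_mul M N : Tset n k d M -> Tset n k d N -> Tset n k d (M *m N).
Proof.
move=> /TsetP [sM [A uA [M11 M33 zM zMt]]] /TsetP [sN [B uB [N11 N33 zN zNt]]].
apply/TsetP; split; first exact: symplectic_mul.
exists (A *m B); first by rewrite unitmx_mul uA uB.
split.
- rewrite mxsub_mulmx_stable //; last apply: lo_idx_inj.
  by rewrite M11 N11 trmx_mul invmxM ?unitmx_tr.
- rewrite mxsub_mulmx_costable //; last apply: hi_idx_inj.
  by rewrite M33 N33.
- exact: coord_stable_mul.
- by rewrite trmx_mul; apply: coord_stable_mul.
Qed.

Lemma Tset_inv M : Tset n k d M -> Tset n k d (invmx M).
Proof.
move=> /TsetP [sM [A uA [M11 M33 zM zMt]]].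
apply/TsetP; split; first exact: symplectic_inv.
exists (invmx A); first by rewrite unitmx_inv.
split.
- by rewrite symplectic_invmx_sub_ul // M33 trmx_inv invmxK.
- by rewrite symplectic_invmx_sub_dr // M11 trmx_inv trmxK.
- exact: symplectic_invmx_stable.
- exact: symplectic_invmx_costable.
Qed.

End SymplecticBlockGroup.

Theorem theorem1 (d n k : nat) (hd : (2 <= d)%N) (hn : (1 <= n)%N) (hk : (k < n)%N) :
  [/\ (forall M : 'M['Z_d]_(n + n), Tset n k d M -> Sp d n M),
      Tset n k d (1%:M : 'M['Z_d]_(n + n)),
      (forall M N : 'M['Z_d]_(n + n), Tset n k d M -> Tset n k d N -> Tset n k d (M *m N))
    & (forall M : 'M['Z_d]_(n + n), Tset n k d M -> Tset n k d (invmx M))].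
Proof.
split.
- by move=> M /TsetP [].
- exact: Tset1.
- exact: Tset_mul.
- exact: Tset_inv.
Qed.
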